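(* Let $\{X_i:i\in I\}$ be a collection of random variables on $\Omega$ and let $P$ assign to each $X_i$ an extended-real marginal prevision $P(X_i)$. Then $P$ is extended-coherent if and only if the collection $\{P(X_i):i\in I\}$ is coherent$_1$.
   Context: Let $\Omega$ be a nonempty set; random variables are real-valued functions on $\Omega$. A marginal prevision $P(X)$ is an extended real number. Coherence$_1$ (marginal case): $\{P(X_i):i\in I\}$ is coherent$_1$ if for every finite $\{i_1,\dots,i_n\}\subseteq I$, all real $\alpha_1,\dots,\alpha_n$ with $\alpha_j\ge0$ whenever $P(X_{i_j})=+\infty$ and $\alpha_j\le 0$ whenever $P(X_{i_j})=-\infty$, and all real $c_1,\dots,c_n$ with $c_j=P(X_{i_j})$ whenever $P(X_{i_j})$ is finite, we have $\sup_\omega\sum_{j=1}^n\alpha_j[X_{i_j}(\omega)-c_j]\ge 0$. Extended-coherence: $P$ is extended-coherent if \[\inf_{\omega\in\Omega}\sum_{j=1}^n\alpha_jX_{i_j}(\omega)\le\sum_{j=1}^n\alpha_jP(X_{i_j})\le\sup_{\omega\in\Omega}\sum_{j=1}^n\alpha_jX_{i_j}(\omega)\] for every finite $n$, all $i_1,\dots,i_n\in I$, and all real $\alpha_1,\dots,\alpha_n$ such that all infinite terms of the form $\alpha_jP(X_{i_j})$ have the same sign. *)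

From mathcomp Require Import all_boot all_order all_algebra.
From mathcomp Require Import all_classical all_reals ereal.
Set Implicit Arguments. Unset Strict Implicit. Unset Printing Implicit Defensive.
Import Order.TTheory GRing.Theory Num.Theory.
Local Open Scope classical_set_scope.
Local Open Scope ring_scope.
Local Open Scope ereal_scope.

(* Coherence_1 (marginal case).  A finite subset {i_1,...,i_n} of I is
   encoded by an injective map idx : 'I_n -> I. *)
Definition coherent1 (R : realType) (Omega I : Type)
  (X : I -> Omega -> R) (P : I -> \bar R) : Prop :=
  forall (n : nat) (idx : 'I_n -> I), injective idx ->
  forall (alpha c : 'I_n -> R),
    (forall j, P (idx j) = +oo -> (0 <= alpha j)%R) ->
    (forall j, P (idx j) = -oo -> (alpha j <= 0)%R) ->
    (forall j, P (idx j) \is a fin_num -> P (idx j) = (c j)%:E) ->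
    0 <= ereal_sup (range (fun w : Omega =>
            (\sum_(j < n) alpha j * (X (idx j) w - c j))%R%:E)).

(* Indices i_1,...,i_n (repetitions allowed) are
   encoded by idx : 'I_n -> I.  The side condition says that the infinite
   terms alpha_j P(X_{i_j}) all have the same sign, i.e. not both a +oo
   and a -oo term occur.  (Convention of \bar R: 0 * (+-oo) = 0.) *)
Definition extended_coherent (R : realType) (Omega I : Type)
  (X : I -> Omega -> R) (P : I -> \bar R) : Prop :=
  forall (n : nat) (idx : 'I_n -> I) (alpha : 'I_n -> R),
    ~ ((exists j, (alpha j)%:E * P (idx j) = +oo) /\
       (exists k, (alpha k)%:E * P (idx k) = -oo)) ->
    ereal_inf (range (fun w : Omega =>
                 (\sum_(j < n) alpha j * X (idx j) w)%R%:E))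
      <= \sum_(j < n) (alpha j)%:E * P (idx j)
    /\ \sum_(j < n) (alpha j)%:E * P (idx j)
      <= ereal_sup (range (fun w : Omega =>
                 (\sum_(j < n) alpha j * X (idx j) w)%R%:E)).

From mathcomp Require Import all_boot all_order all_algebra.
From mathcomp Require Import all_classical all_reals ereal.
Set Implicit Arguments. Unset Strict Implicit. Unset Printing Implicit Defensive.
Import Order.TTheory GRing.Theory Num.Theory.
Local Open Scope classical_set_scope.
Local Open Scope ring_scope.
Local Open Scope ereal_scope.

(* The upper bound sum_j a_j P(X_{i_j}) <= sup sum_j a_j X_{i_j} carries the
   theorem.  If some term is -oo it is trivial; otherwise the a_j satisfy the
   sign conditions of coherence_1.  Replacing every prevision +oo (resp. -oo)
   by the real number t (resp. -t), coherence_1 gives sup >= K + t D for all t,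
   with D >= 0 the total weight put on infinite previsions: if D > 0 the sup is
   +oo, and if D = 0 all infinite terms vanish and t = 0 gives the bound.
   Repeated indices are first merged by adding their coefficients.  The lower
   bound is the upper bound for -a, and conversely coherence_1 follows from the
   upper bound since a_j c_j <= a_j P(X_{i_j}) termwise. *)

Section ExtendedCoherence.
Variable R : realType.

Lemma sum_merge_repeated_indices (T : Type) n (idx : 'I_n -> T) (alpha : 'I_n -> R) :
  exists m (idx' : 'I_m -> T) (beta : 'I_m -> R),
  [/\ injective idx',
      forall k, beta k = (\sum_(j < n | `[< idx j = idx' k >]) alpha j)%R &
      forall F : T -> R,
        (\sum_(j < n) alpha j * F (idx j) = \sum_(k < m) beta k * F (idx' k))%R].
Proof.
pose rep (j : 'I_n) : 'I_n := [arg min_(k < j | `[< idx k = idx j >]) (k : nat)].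
have idx_rep j : idx (rep j) = idx j.
  by rewrite /rep; case: arg_minnP => [|r /asboolP] //; exact/asboolP.
have rep_min j k : idx k = idx j -> (rep j <= k)%N.
  by rewrite /rep; case: arg_minnP => [|r _ r_min /asboolP]; [exact/asboolP|exact: r_min].
have rep_eq j k : idx j = idx k -> rep j = rep k.
  move=> E; apply/val_inj/eqP; rewrite eqn_leq.
  by rewrite rep_min ?rep_min ?idx_rep.
pose S : {set 'I_n} := [set j | rep j == j]%SET.
have rep_enum (k : 'I_#|S|) : rep (enum_val k) = enum_val k.
  by apply/eqP; have := enum_valP k; rewrite inE.
have rep_enumE j (k : 'I_#|S|) : (rep j == enum_val k) = `[< idx j = idx (enum_val k) >].
  apply/eqP/asboolP => [<-|E]; first by rewrite idx_rep.
  by rewrite (rep_eq _ _ E) rep_enum.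
exists #|S|, (idx \o enum_val), (fun k => \sum_(j < n | rep j == enum_val k) alpha j)%R.
split=> [k k' /= E|k|F].
- by apply: enum_val_inj; rewrite -rep_enum -[RHS]rep_enum; exact: rep_eq.
- by apply: eq_bigl => j; rewrite rep_enumE.
rewrite (partition_big rep (mem S)) /=;
  last by move=> j _; rewrite inE (rep_eq _ _ (idx_rep j)).
rewrite big_enum_val; apply: eq_bigr => k _; rewrite big_distrl /=.
by apply: eq_bigr => j /eqP <-; rewrite idx_rep.
Qed.

Section SupRange.
Variable Omega : Type.

Lemma ereal_sup_range_subr (g : Omega -> R) (a : R) :
  ereal_sup (range (fun w => (g w - a)%:E))
    = ereal_sup (range (fun w => (g w)%:E)) - a%:E.
Proof.
apply/le_anti/andP; split.
  apply: ge_ereal_sup => _ [w _ <-].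
  by rewrite leeBrDr // -EFinD subrK; apply: ereal_sup_ubound; exists w.
rewrite leeBlDr //; apply: ge_ereal_sup => _ [w _ <-].
by rewrite -leeBlDr // -EFinB; apply: ereal_sup_ubound; exists w.
Qed.

Lemma ereal_inf_range_opp (f g : Omega -> R) : (forall w, g w = - f w)%R ->
  ereal_inf (range (fun w => (f w)%:E)) = - ereal_sup (range (fun w => (g w)%:E)).
Proof.
move=> gE; rewrite /ereal_inf; congr (- ereal_sup _); apply/seteqP; split.
  by move=> _ [_ [w _ <-] <-]; exists w; rewrite // gE.
by move=> _ [w _ <-]; exists (EFin (f w)); [by exists w|by rewrite gE].
Qed.

End SupRange.

Definition admissible_coef (a : R) (x : \bar R) : Prop :=
  (x = +oo -> (0 <= a)%R) /\ (x = -oo -> (a <= 0)%R).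

Lemma admissible_coefP a x : admissible_coef a x <-> a%:E * x != -oo.
Proof.
split=> [[pos neg]|].
  case: x pos neg => [x| |] pos neg //.
  - have [->|a_gt0] := eqVneq a 0%R; rewrite ?mul0e //.
    by rewrite mulry gtr0_sg ?mul1e // lt_def a_gt0 pos.
  - have [->|a_lt0] := eqVneq a 0%R; rewrite ?mul0e //.
    by rewrite mulrNy ltr0_sg ?mulN1e // lt_def eq_sym a_lt0 neg.
case: x => [x| |] ax; split=> // _; rewrite leNgt; apply/negP => a_lt0; move: ax.
- by rewrite mulry ltr0_sg // mulN1e.
- by rewrite mulrNy gtr0_sg // mul1e.
Qed.

Lemma lee_EFin_mul_admissible a x c : admissible_coef a x ->
  (x \is a fin_num -> x = c%:E) -> (a * c)%:E <= a%:E * x.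
Proof.
case: x => [x| |] [pos neg] xc; first by rewrite (xc isT) EFinM.
- have [->|a_gt0] := eqVneq a 0%R; first by rewrite mul0r mul0e.
  by rewrite mulry gtr0_sg ?mul1e ?leey // lt_def a_gt0 pos.
- have [->|a_lt0] := eqVneq a 0%R; first by rewrite mul0r mul0e.
  by rewrite mulrNy ltr0_sg ?mulN1e ?leey // lt_def eq_sym a_lt0 neg.
Qed.

Definition inf_sign (x : \bar R) : R :=
  match x with +oo => 1 | -oo => -1 | _ => 0 end%R.

Lemma admissible_coef_mul_sign_ge0 a x : admissible_coef a x -> (0 <= a * inf_sign x)%R.
Proof.
by case: x => [x| |] [pos neg] /=; rewrite ?mulr0 ?mulr1 ?mulrN1 ?oppr_ge0 ?pos ?neg.
Qed.

Lemma mul_inf_sign_eq0 a x : (a * inf_sign x = 0)%R -> a%:E * x = (a * fine x)%:E.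
Proof.
case: x => [x _|/=|/=]; first by rewrite EFinM.
  by rewrite mulr1 => ->; rewrite mul0e mul0r.
by rewrite mulrN1 => /eqP; rewrite oppr_eq0 => /eqP ->; rewrite mul0e mul0r.
Qed.

Lemma esumN_unmixed n (f : 'I_n -> \bar R) :
  ~ ((exists j, f j = +oo) /\ (exists k, f k = -oo)) ->
  \sum_(j < n) - f j = - \sum_(j < n) f j.
Proof.
move=> unmixed; apply: sumeN => i j _ _.
by apply/andP; split; apply/negP => /andP[/eqP fi /eqP fj]; apply: unmixed; eauto.
Qed.

(* Since [fine] sends +oo and -oo to 0, [fine x + t * inf_sign x] is [x] with
   +oo and -oo replaced by t and -t. *)
Lemma esum_le_of_perturbed n (alpha : 'I_n -> R) (x : 'I_n -> \bar R) (s : \bar R) :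
  (forall j, admissible_coef (alpha j) (x j)) ->
  (forall t : R, (\sum_(j < n) alpha j * (fine (x j) + t * inf_sign (x j)))%R%:E <= s) ->
  \sum_(j < n) (alpha j)%:E * x j <= s.
Proof.
move=> adm le_s.
set K := (\sum_(j < n) alpha j * fine (x j))%R.
set D := (\sum_(j < n) alpha j * inf_sign (x j))%R.
have sumKD t : (\sum_(j < n) alpha j * (fine (x j) + t * inf_sign (x j)) = K + t * D)%R.
  rewrite mulr_sumr -big_split; apply: eq_bigr => j _.
  by rewrite mulrDr mulrCA.
have D_ge0 : (0 <= D)%R by apply: sumr_ge0 => j _; exact: admissible_coef_mul_sign_ge0.
have [D_gt0|D_le0] := ltP 0%R D.
  suff -> : s = +oo by rewrite leey.
  apply/eqyP => A _; have := le_s ((A - K) / D)%R.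
  by rewrite sumKD divfK ?gt_eqF // addrC subrK.
have D0 : D = 0%R by apply/le_anti; rewrite D_le0 D_ge0.
have termwise_eq0 j : (alpha j * inf_sign (x j) = 0)%R.
  by apply: (psumr_eq0P _ D0) => // i _; exact: admissible_coef_mul_sign_ge0.
apply: le_trans (le_s 0%R); rewrite -sumEFin; apply: lee_sum => j _.
by rewrite mul0r addr0 mul_inf_sign_eq0.
Qed.

Section Coherence.
Variables (Omega I : Type) (X : I -> Omega -> R) (P : I -> \bar R).

Lemma coherent1_repeated_indices (h : I -> R) : coherent1 X P ->
  (forall i, P i \is a fin_num -> P i = (h i)%:E) ->
  forall n (idx : 'I_n -> I) (alpha : 'I_n -> R),
  (forall j, admissible_coef (alpha j) (P (idx j))) ->
  0 <= ereal_sup (range (fun w =>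
         (\sum_(j < n) alpha j * (X (idx j) w - h (idx j)))%R%:E)).
Proof.
move=> coh Ph n idx alpha adm.
have [m [idx' [beta [idx'_inj betaE sumE]]]] := sum_merge_repeated_indices idx alpha.
under eq_fun => w do rewrite (sumE (fun i => X i w - h i)%R).
apply: coh => // [k Pk|k Pk|k]; rewrite ?betaE.
- by apply: sumr_ge0 => j /asboolP Ej; apply: (adm j).1; rewrite Ej.
- by apply: sumr_le0 => j /asboolP Ej; apply: (adm j).2; rewrite Ej.
- exact: Ph.
Qed.

Lemma coherent1_le_ereal_sup : coherent1 X P ->
  forall n (idx : 'I_n -> I) (alpha : 'I_n -> R),
  \sum_(j < n) (alpha j)%:E * P (idx j)
    <= ereal_sup (range (fun w => (\sum_(j < n) alpha j * X (idx j) w)%R%:E)).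
Proof.
move=> coh n idx alpha.
have [[k Pk]|no_Ny] := pselect (exists k, (alpha k)%:E * P (idx k) = -oo).
  suff -> : \sum_(j < n) (alpha j)%:E * P (idx j) = -oo by rewrite leNye.
  by apply/esum_eqNyP; exists k; split => //; exact: mem_index_enum.
have adm j : admissible_coef (alpha j) (P (idx j)).
  by apply/admissible_coefP/eqP => Pj; apply: no_Ny; exists j.
apply: esum_le_of_perturbed => // t.
rewrite -sube_ge0 ?fin_numE // -ereal_sup_range_subr.
under eq_fun => w do rewrite -sumrB.
under eq_fun => w do under eq_bigr => j _ do rewrite -mulrBr.
apply: (coherent1_repeated_indices
          (h := fun i => fine (P i) + t * inf_sign (P i))%R) => //.
by move=> i; case: (P i) => [p| |] //= _; rewrite mulr0 addr0.
Qed.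

End Coherence.

End ExtendedCoherence.

Theorem lemma3p1 (R : realType) (Omega I : Type) (HOmega : inhabited Omega)
  (X : I -> Omega -> R) (P : I -> \bar R) :
  extended_coherent X P <-> coherent1 X P.
Proof.
split=> [ext n idx _ alpha c pos neg Pc|coh n idx alpha unmixed].
  have adm j : admissible_coef (alpha j) (P (idx j)) by split; [exact: pos|exact: neg].
  have [|_ le_sup] := ext n idx alpha.
    by move=> [_ [k Pk]]; move: (adm k) => /admissible_coefP; rewrite Pk.
  under eq_fun => w do under eq_bigr => j _ do rewrite mulrBr.
  under eq_fun => w do rewrite sumrB.
  rewrite ereal_sup_range_subr sube_ge0 ?fin_numE //; apply: le_trans le_sup.
  rewrite -sumEFin; apply: lee_sum => j _.
  exact: lee_EFin_mul_admissible (adm j) (Pc j).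
split; last exact: coherent1_le_ereal_sup.
rewrite (ereal_inf_range_opp (g := fun w => \sum_(j < n) - alpha j * X (idx j) w)%R);
  last by move=> w; rewrite -sumrN; apply: eq_bigr => j _; rewrite mulNr.
rewrite leeNl -esumN_unmixed //.
under eq_bigr => j _ do rewrite -mulNe -EFinN.
exact: coherent1_le_ereal_sup.
Qed.
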